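(* Let $\mathcal A$ be a causal linear time-invariant algorithm with $n$ oracles and transfer function $\hat H(z)$, let $\kappa$ be a subset of its oracles with $D[\kappa]$ invertible, and let $\pi=(m+1,\dots,n,1,\dots,m)$ be a cyclic permutation of the oracles. Then conjugation and cyclic permutation commute: $\mathcal C_\kappa P_\pi\mathcal A$ and $P_\pi\mathcal C_\kappa\mathcal A$ have identical transfer functions.
   Context: A linear time-invariant algorithm with realization $(A,B,C,D)$ generates $x^{k+1}=Ax^k+Bu^k$, $y^k=Cx^k+Du^k$, $u^k=\phi(y^k)$, with oracles $\partial f_1,\dots,\partial f_n$ ((sub)gradients of convex functions) called sequentially in the order $1,\dots,n$; its transfer function is $\hat H(z)=C(zI-A)^{-1}B+D$. Causality means $D$ (blockwise by oracle, in call order) is lower triangular. $D[\kappa]$ is the principal block of $D$ indexed by $\kappa$. $P_\pi\mathcal A$ denotes the algorithm that executes the update equations of $\mathcal A$ in a different order so that the oracle calls within each iteration occur in the order $\pi$. $\mathcal C_\kappa\mathcal A$ denotes the algorithm obtained by rewriting $\mathcal A$ to call $\partial f_i^\star=(\partial f_i)^{-1}$ ($f^\star$ the Fenchel conjugate) instead of $\partial f_i$ for each $i\in\kappa$, thereby swapping oracle argument and output for those oracles. *)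

From HB Require Import structures.
From mathcomp Require Import all_boot all_order all_algebra fraction.
Set Implicit Arguments. Unset Strict Implicit. Unset Printing Implicit Defensive.
Import Order.TTheory GRing.Theory Num.Theory.
Local Open Scope ring_scope.

(* Conventions:
   - The algorithm has n oracles, numbered 0..n-1 (= the paper's 1..n), called
     in this order within each iteration.
   - The input/output vectors u, y live in R^p; coordinate j belongs to oracle
     [owner j] (so oracle i has block {j | owner j = i}).  Coordinates are
     kept labelled: permuting/conjugating never reorders the coordinates of u
     and y, it only changes the realization.
   - State dimension s. *)

Record realization (R : Type) (s p : nat) := Realization {
  rA : 'M[R]_s; rB : 'M[R]_(s, p); rC : 'M[R]_(p, s); rD : 'M[R]_p }.

Section Defs.
Variables (R : fieldType) (n p : nat) (owner : 'I_p -> 'I_n).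

Definition oracle_coords (kappa : {set 'I_n}) : {set 'I_p} :=
  [set j | owner j \in kappa].

Definition principal_sub (D : 'M[R]_p) (K : {set 'I_p}) : 'M[R]_#|K| :=
  \matrix_(i < #|K|, j < #|K|) D (enum_val i) (enum_val j).

Definition causal (s : nat) (X : realization R s p) : Prop :=
  forall i j : 'I_p, (owner i < owner j)%N -> rD X i j = 0.

Definition proj (S : {set 'I_p}) : 'M[R]_p := diag_mx (\row_j (j \in S)%:R).

(* P_pi A for pi = (m+1,...,n,1,...,m): oracles 1..m of iteration k+1 are
   executed at the end of iteration k.  New state (x^k, u_1^k) where
   u_1 are the outputs of oracles 1..m. *)
Definition perm_alg (m : nat) (s : nat) (X : realization R s p)
  : realization R (s + p) p :=
  let P1 := proj [set j | (owner j < m)%N] in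
  let P2 := 1%:M - P1 in
  let A := rA X in let B := rB X in let C := rC X in let D := rD X in
  Realization
    (block_mx A (B *m P1) 0 0)
    (col_mx (B *m P2) P1)
    (row_mx (P2 *m C + P1 *m C *m A) (P2 *m D *m P1 + P1 *m C *m B *m P1))
    (P2 *m D *m P2 + P1 *m C *m B *m P2 + P1 *m D *m P1).

(* C_kappa A: oracles in kappa are replaced by their inverses (conjugate
   subdifferentials), swapping their arguments and outputs.  Solving
   y_K = C_K x + D u for u_K uses D[K]^{-1}, embedded as Minv. *)
Definition conj_alg (kappa : {set 'I_n}) (s : nat) (X : realization R s p)
  : realization R s p :=
  let PK := proj (oracle_coords kappa) in
  let PN := 1%:M - PK in
  let A := rA X in let B := rB X in let C := rC X in let D := rD X in
  let Minv := PK *m invmx (PK *m D *m PK + PN) *m PK in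
  let Q := PN - Minv *m D *m PN + Minv in
  let L := PN *m D + PK in
  Realization (A - B *m Minv *m C) (B *m Q) (PN *m C - L *m Minv *m C) (L *m Q).

Definition frac_poly (q : {poly R}) : {fraction {poly R}} := FracField.tofrac q.
Definition ratC (x : R) : {fraction {poly R}} := frac_poly x%:P.

Definition transfer (s : nat) (X : realization R s p)
  : 'M[{fraction {poly R}}]_p :=
  map_mx ratC (rC X) *m invmx ((frac_poly 'X)%:M - map_mx ratC (rA X))
    *m map_mx ratC (rB X) + map_mx ratC (rD X).

End Defs.

(* Let P_k and P_1 be the diagonal projectors onto the coordinates of the oracles
   in kappa and of the first m oracles.  Both operations act on transfer functions
   alone: conjugation is the partial inversion
     H |-> (P_k + (1 - P_k) H) (P_k H + 1 - P_k)^-1,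
   and the cyclic permutation, which makes the outputs of oracles 1..m available one
   step later, is the similarity H |-> S H S^-1 with S = z P_1 + (1 - P_1).  Since S
   is diagonal it commutes with P_k, hence with the partial inversion.  It remains to
   see that both composites are well posed: causality makes D block lower triangular
   for the splitting P_1 + (1 - P_1); conjugation preserves this, and permutation
   produces a block upper triangular D with the same diagonal blocks, so the matrix
   P_k D P_k + 1 - P_k inverted by conjugation stays invertible. *)

From HB Require Import structures.
From mathcomp Require Import all_boot all_order all_algebra fraction.
Set Implicit Arguments. Unset Strict Implicit. Unset Printing Implicit Defensive.
Import GRing.Theory.
Local Open Scope ring_scope.

Lemma invmx_comm (K : fieldType) (p : nat) (A B : 'M[K]_p) :
  comm_mx A B -> comm_mx (invmx A) B.
Proof.
rewrite /comm_mx => AB.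
have [uA | nuA] := boolP (A \in unitmx); last by rewrite invmx_out.
by rewrite -[LHS](mulmxK uA) -(mulmxA (invmx A)) -AB mulmxA mulVmx // mul1mx.
Qed.

Lemma mulmx1_invmx (K : fieldType) (p : nat) (A B : 'M[K]_p) :
  A *m B = 1%:M -> invmx A = B.
Proof.
move=> AB; have [uA _] := mulmx1_unit AB.
by rewrite -[invmx A]mulmx1 -AB mulmxA mulVmx // mul1mx.
Qed.

Lemma invmx_similar (K : fieldType) (p : nat) (S M : 'M[K]_p) :
  S \in unitmx -> invmx (S *m M *m invmx S) = S *m invmx M *m invmx S.
Proof.
move=> uS; have [uM | nuM] := boolP (M \in unitmx).
  apply: mulmx1_invmx; rewrite !mulmxA mulmxKV // -(mulmxA S) mulmxV // mulmx1.
  exact: mulmxV.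
have nuSM : S *m M *m invmx S \notin unitmx.
  by rewrite !unitmx_mul unitmx_inv uS (negbTE nuM).
by rewrite (invmx_out nuSM) (invmx_out nuM).
Qed.

Definition complementary (K : fieldType) (p : nat) (P Q : 'M[K]_p) :=
  P *m P = P /\ P + Q = 1%:M.

Lemma complementary_compl (K : fieldType) (p : nat) (P : 'M[K]_p) :
  P *m P = P -> complementary P (1%:M - P).
Proof. by split=> //; rewrite addrC subrK. Qed.

Section ComplementaryIdempotents.
Variables (K : fieldType) (p : nat) (P Q : 'M[K]_p).
Hypothesis PQc : complementary P Q.
Let idemP : P *m P = P := proj1 PQc.
Let PQ : P + Q = 1%:M := proj2 PQc.

Lemma compl_idemE : Q = 1%:M - P.
Proof. by rewrite -PQ addrAC subrr add0r. Qed.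

Lemma idem_mul_compl : P *m Q = 0.
Proof. by rewrite compl_idemE mulmxBr mulmx1 idemP subrr. Qed.

Lemma compl_mul_idem : Q *m P = 0.
Proof. by rewrite compl_idemE mulmxBl mul1mx idemP subrr. Qed.

Lemma compl_idem : Q *m Q = Q.
Proof. by rewrite {1}compl_idemE mulmxBl mul1mx idem_mul_compl subr0. Qed.

Lemma complementaryC : complementary Q P.
Proof. by split; [exact: compl_idem | rewrite addrC]. Qed.

Definition block_lower (M : 'M[K]_p) := P *m M *m Q = 0.

Definition block_diag (M : 'M[K]_p) := P *m M *m P + Q *m M *m Q.

Lemma compl_comm X : comm_mx P X -> comm_mx Q X.
Proof.
by move=> PX; rewrite compl_idemE; apply/comm_mx_sym/(comm_mxB (comm_mx1 X))/comm_mx_sym.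
Qed.

Lemma block_lower_comm M : comm_mx P M -> block_lower M.
Proof. by move=> PM; rewrite /block_lower PM -mulmxA idem_mul_compl mulmx0. Qed.

Lemma block_lowerD M N : block_lower M -> block_lower N -> block_lower (M + N).
Proof. by rewrite /block_lower mulmxDr mulmxDl => -> ->; rewrite addr0. Qed.

Lemma block_lowerB M N : block_lower M -> block_lower N -> block_lower (M - N).
Proof. by rewrite /block_lower mulmxBr mulmxBl => -> ->; rewrite subr0. Qed.

Lemma block_lowerPM M : block_lower M -> P *m M = P *m M *m P.
Proof. by move=> lM; rewrite -[LHS]mulmx1 -PQ mulmxDr lM addr0. Qed.

Lemma block_lowerMQ M : block_lower M -> M *m Q = Q *m M *m Q.
Proof. by move=> lM; rewrite -{1}[M]mul1mx -PQ !mulmxDl lM add0r. Qed.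

Lemma block_lowerM M N : block_lower M -> block_lower N -> block_lower (M *m N).
Proof.
move=> lM lN; rewrite /block_lower mulmxA block_lowerPM //.
by rewrite -!mulmxA (mulmxA P N) lN !mulmx0.
Qed.

Lemma block_lower_compl_mul M : block_lower (Q *m M).
Proof. by rewrite /block_lower mulmxA idem_mul_compl !mul0mx. Qed.

(* In finite dimension the one-sided inverse [P Y P + Q] of [P X P + Q] is two-sided. *)
Lemma corner_invC X Y :
  P *m X *m P *m Y *m P = P -> P *m Y *m P *m X *m P = P.
Proof.
have expand Z W : (P *m Z *m P + Q) *m (P *m W *m P + Q)
                  = P *m Z *m P *m W *m P + Q.
  rewrite mulmxDl !mulmxDr compl_idem !mulmxA -(mulmxA (P *m Z) P Q).
  rewrite idem_mul_compl compl_mul_idem -(mulmxA (P *m Z) P P) idemP.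
  by rewrite mulmx0 !mul0mx addr0 add0r.
move=> XY; have /mulmx1C : (P *m X *m P + Q) *m (P *m Y *m P + Q) = 1%:M.
  by rewrite expand XY.
by rewrite expand -PQ => /addIr.
Qed.

Lemma block_lower_split M : block_lower M -> M = block_diag M + Q *m M *m P.
Proof.
move=> lM; rewrite -[LHS]mul1mx -[LHS]mulmx1 -PQ.
rewrite !mulmxDl !mulmxDr lM addr0 /block_diag -addrA [Q *m M *m P + _]addrC.
by rewrite addrA.
Qed.

Lemma block_diag_comm M : comm_mx P (block_diag M).
Proof.
rewrite /comm_mx /block_diag mulmxDr mulmxDl !mulmxA idemP idem_mul_compl !mul0mx addr0.
by rewrite -!mulmxA idemP compl_mul_idem !mulmx0 addr0.
Qed.

Lemma block_diagD M N : block_diag (M + N) = block_diag M + block_diag N.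
Proof. by rewrite /block_diag !(mulmxDr, mulmxDl) addrACA. Qed.

Lemma block_diag_id_comm X : comm_mx P X -> block_diag X = X.
Proof.
move=> PX; rewrite /block_diag PX (compl_comm PX) -!mulmxA idemP compl_idem.
by rewrite -mulmxDr PQ mulmx1.
Qed.

Lemma block_diag_mul_comm S M T :
  comm_mx P S -> comm_mx P T -> block_diag (S *m M *m T) = S *m block_diag M *m T.
Proof.
move=> PS PT; rewrite /block_diag mulmxDr mulmxDl !mulmxA PS (compl_comm PS).
by rewrite -!mulmxA -PT -(compl_comm PT).
Qed.

Lemma block_diag_offdiag Y : block_diag (P *m Y *m Q) = 0.
Proof.
rewrite /block_diag !mulmxA compl_mul_idem !mul0mx addr0 -!mulmxA compl_mul_idem.
by rewrite !mulmx0.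
Qed.

Lemma block_diag_mul X Y :
  block_diag X *m block_diag Y = P *m X *m P *m Y *m P + Q *m X *m Q *m Y *m Q.
Proof.
rewrite /block_diag mulmxDl !mulmxDr !mulmxA.
rewrite -(mulmxA (P *m X) P P) -(mulmxA (P *m X) P Q) -(mulmxA (Q *m X) Q P).
rewrite -(mulmxA (Q *m X) Q Q) idemP idem_mul_compl compl_mul_idem compl_idem.
by rewrite !mulmx0 !mul0mx addr0 add0r.
Qed.

Lemma block_lower_corner_inv M W :
  block_lower M -> M *m W = 1%:M -> P *m M *m P *m W = P.
Proof. by move=> lM MW; rewrite -block_lowerPM // -mulmxA MW mulmx1. Qed.

End ComplementaryIdempotents.

Section BlockTriangular.
Variables (K : fieldType) (p : nat) (P Q : 'M[K]_p).
Hypothesis PQc : complementary P Q.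
Let QPc : complementary Q P := complementaryC PQc.

Lemma block_diagC M : block_diag Q P M = block_diag P Q M.
Proof. exact: addrC. Qed.

Lemma unitmx_block_lower M :
  block_lower P Q M -> (M \in unitmx) = (block_diag P Q M \in unitmx).
Proof.
move=> lM; apply/idP/idP => [uM | uD].
  have cornerP : P *m M *m P *m invmx M *m P = P.
    by rewrite (block_lower_corner_inv PQc lM) ?mulmxV // PQc.1.
  have cornerQ : Q *m M *m Q *m invmx M *m Q = Q.
    apply: (corner_invC QPc).
    rewrite -!mulmxA (mulmxA Q M Q) -(block_lowerMQ PQc lM) (mulmxA (invmx M)).
    by rewrite mulVmx // mul1mx (compl_idem PQc).
  have /mulmx1_unit[] // : block_diag P Q M *m block_diag P Q (invmx M) = 1%:M.
  by rewrite (block_diag_mul PQc) cornerP cornerQ PQc.2.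
(* [N := Q M P] satisfies [N W0 N = 0], so [M = block_diag M + N] is inverted by
   [W0 - W0 N W0]. *)
set W0 := invmx (block_diag P Q M); set N := Q *m M *m P.
have W0P : comm_mx P W0 by apply/comm_mx_sym/invmx_comm/comm_mx_sym/block_diag_comm.
have NWN : N *m W0 *m N = 0.
  by rewrite /N -!mulmxA (mulmxA P) W0P -!mulmxA (mulmxA P Q) (idem_mul_compl PQc)
    !mul0mx !mulmx0.
have /mulmx1_unit[] // : M *m (W0 - W0 *m N *m W0) = 1%:M.
rewrite {1}(block_lower_split PQc lM) -/N; clearbody N.
by rewrite mulmxDl !mulmxBr !mulmxA mulmxV // mul1mx NWN mul0mx subr0 subrK.
Qed.

Lemma block_lower_invmx M : block_lower P Q M -> block_lower P Q (invmx M).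
Proof.
move=> lM; have [uM | nuM] := boolP (M \in unitmx); last by rewrite invmx_out.
have PMPW : P *m M *m P *m invmx M = P.
  exact: (block_lower_corner_inv PQc lM (mulmxV uM)).
have PWPMP : P *m invmx M *m P *m M *m P = P.
  by apply: (corner_invC PQc); rewrite PMPW PQc.1.
rewrite /block_lower -PWPMP.
have -> : P *m invmx M *m P *m M *m P *m invmx M *m Q
          = P *m invmx M *m (P *m M *m P *m invmx M) *m Q by rewrite !mulmxA.
by rewrite PMPW -mulmxA (idem_mul_compl PQc) mulmx0.
Qed.

End BlockTriangular.

Section Projections.
Variables (K : fieldType) (p : nat).
Implicit Types (S T : {set 'I_p}).

Lemma proj_mulmxE S T (M : 'M[K]_p) i j :
  (proj K S *m M *m proj K T) i j = (i \in S)%:R * M i j * (j \in T)%:R.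
Proof. by rewrite /proj mul_mx_diag mul_diag_mx !mxE. Qed.

Lemma proj_compl S : 1%:M - proj K S = proj K (~: S).
Proof.
apply/matrixP=> i j; rewrite !mxE in_setC.
by case: (i \in S); case: (i == j); rewrite ?subrr ?subr0.
Qed.

Lemma proj_comm S T : comm_mx (proj K S) (proj K T).
Proof. exact: diag_mxC. Qed.

Lemma proj_idem S : proj K S *m proj K S = proj K S.
Proof.
by rewrite /proj mulmx_diag; congr diag_mx; apply/rowP=> j; rewrite !mxE; case: (j \in S);
  rewrite ?mulr1 ?mulr0.
Qed.

Lemma complementary_proj S : complementary (proj K S) (1%:M - proj K S).
Proof. exact/complementary_compl/proj_idem. Qed.

Lemma map_proj (L : fieldType) (f : {rmorphism K -> L}) S :
  map_mx f (proj K S) = proj L S.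
Proof. by apply/matrixP=> i j; rewrite !mxE rmorphMn rmorph_nat. Qed.

End Projections.

(* The matrix inverted by [conj_alg], for [P] the projector onto the conjugated
   coordinates. *)
Definition corner_pad (K : fieldType) (p : nat) (P D : 'M[K]_p) :=
  P *m D *m P + (1%:M - P).

Lemma block_diag_corner_pad (K : fieldType) (p : nat) (P Q S D : 'M[K]_p) :
  complementary P Q -> comm_mx P S ->
  block_diag P Q (corner_pad S D) = corner_pad S (block_diag P Q D).
Proof.
move=> PQc PS; rewrite /corner_pad block_diagD (block_diag_mul_comm PQc) //.
by rewrite (block_diag_id_comm PQc (comm_mxB (comm_mx1 P) PS)).
Qed.

Lemma block_lower_corner_pad (K : fieldType) (p : nat) (P Q S D : 'M[K]_p) :
  complementary P Q -> comm_mx P S -> block_lower P Q D ->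
  block_lower P Q (corner_pad S D).
Proof.
move=> PQc PS lowD; have lowS := block_lower_comm PQc PS.
apply: block_lowerD (block_lower_comm PQc (comm_mxB (comm_mx1 P) PS)).
exact: (block_lowerM PQc (block_lowerM PQc lowS lowD) lowS).
Qed.

Lemma unitmx_corner_pad (K : fieldType) (p k : nat) (J : 'M[K]_(k, p))
    (J' : 'M[K]_(p, k)) (D : 'M[K]_p) :
  J *m J' = 1%:M -> J *m D *m J' \in unitmx -> corner_pad (J' *m J) D \in unitmx.
Proof.
move=> JJ' uDk; set PK := J' *m J.
have PKJ' : PK *m J' = J' by rewrite -mulmxA JJ' mulmx1.
have PQc : complementary PK (1%:M - PK).
  by split; [rewrite {2}/PK mulmxA PKJ' | rewrite addrC subrK].
have PNJ' : (1%:M - PK) *m J' = 0 by rewrite mulmxBl mul1mx PKJ' subrr.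
have corner : PK *m D *m PK *m J' = J' *m (J *m D *m J').
  by rewrite -mulmxA PKJ' /PK !mulmxA.
have /mulmx1_unit[] // :
  corner_pad PK D *m (J' *m invmx (J *m D *m J') *m J + (1%:M - PK)) = 1%:M.
have PKE : J' *m J = PK by [].
rewrite /corner_pad; move: (1%:M - PK) PNJ' (idem_mul_compl PQc) (compl_idem PQc) PQc.2.
move=> PN PNJ' PKPN PNPN PKPN1; clearbody PK.
rewrite mulmxDl !mulmxDr !mulmxA corner -(mulmxA J') mulmxV // mulmx1 PKE.
by rewrite -mulmxA PKPN mulmx0 PNJ' !mul0mx PNPN addr0 add0r.
Qed.

Lemma unitmx_principal_sub (K : fieldType) (p : nat) (D : 'M[K]_p) (S : {set 'I_p}) :
  principal_sub D S \in unitmx -> corner_pad (proj K S) D \in unitmx.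
Proof.
pose J : 'M[K]_(#|S|, p) := \matrix_(i, j) (enum_val i == j)%:R.
pose J' : 'M[K]_(p, #|S|) := \matrix_(i, j) (i == enum_val j)%:R.
have JM q (M : 'M[K]_(p, q)) i j : (J *m M) i j = M (enum_val i) j.
  rewrite !mxE (bigD1 (enum_val i)) //= mxE eqxx mul1r big1 ?addr0 // => l ne_l.
  by rewrite mxE eq_sym (negbTE ne_l) mul0r.
have MJ' q (M : 'M[K]_(q, p)) i j : (M *m J') i j = M i (enum_val j).
  rewrite !mxE (bigD1 (enum_val j)) //= mxE eqxx mulr1 big1 ?addr0 // => l ne_l.
  by rewrite mxE (negbTE ne_l) mulr0.
have JJ' : J *m J' = 1%:M.
  by apply/matrixP=> i j; rewrite JM !mxE (inj_eq enum_val_inj).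
have J'J : J' *m J = proj K S.
  apply/matrixP=> a b; rewrite !mxE; under eq_bigr do rewrite !mxE.
  rewrite -(big_enum_val (fun x => (a == x)%:R * (x == b)%:R)) /=.
  rewrite big_mkcond (bigD1 a) //= eqxx mul1r big1 => [|x ne_x]; last first.
    by rewrite eq_sym (negbTE ne_x) mul0r if_same.
  by rewrite addr0; case: (a \in S); case: (a == b).
have -> : principal_sub D S = J *m D *m J'.
  by apply/matrixP=> i j; rewrite MJ' JM mxE.
by rewrite -J'J; exact: unitmx_corner_pad.
Qed.

Lemma mul_corner_pad_inv (K : fieldType) (p : nat) (P D : 'M[K]_p) :
  P *m P = P -> corner_pad P D \in unitmx ->
  (P *m D + (1%:M - P)) *m (P *m invmx (corner_pad P D) *m P) = P.
Proof.
move=> idP uE; have PQc := complementary_compl idP.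
have NP := compl_mul_idem PQc; have PN := idem_mul_compl PQc.
have WP : comm_mx (invmx (corner_pad P D)) P.
  apply: invmx_comm; rewrite /comm_mx /corner_pad mulmxDl mulmxDr PN NP -!mulmxA idP.
  by rewrite !mulmxA idP addr0.
have PDP : P *m D *m P = corner_pad P D - (1%:M - P) by rewrite /corner_pad addrK.
move: (1%:M - P) (corner_pad P D) NP PN WP PDP uE => N E NP PN WP PDP uE.
rewrite mulmxDl !mulmxA PDP NP !mul0mx addr0 !mulmxBl mulmxV // mul1mx.
by rewrite -mulmxA WP mulmxA NP mul0mx subr0.
Qed.

Definition transfer_at (K : fieldType) (s p : nat) (z : K) (Y : realization K s p) :=
  rC Y *m invmx (z%:M - rA Y) *m rB Y + rD Y.

(* Transfer matrix of [y = T u] after exchanging the [P]-coordinates of [u] and [y]. *)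
Definition conj_transfer (K : fieldType) (p : nat) (P T : 'M[K]_p) :=
  (P + (1%:M - P) *m T) *m invmx (P *m T + (1%:M - P)).

Lemma conj_transfer_similar (K : fieldType) (p : nat) (P S T : 'M[K]_p) :
  S \in unitmx -> comm_mx P S ->
  conj_transfer P (S *m T *m invmx S) = S *m conj_transfer P T *m invmx S.
Proof.
move=> uS PS; have SPS : S *m P *m invmx S = P by rewrite -PS mulmxK.
have NS : comm_mx (1%:M - P) S.
  exact/comm_mx_sym/(comm_mxB (comm_mx1 S))/comm_mx_sym.
have SNS : S *m (1%:M - P) *m invmx S = 1%:M - P by rewrite -NS mulmxK.
rewrite /conj_transfer.
have -> : P + (1%:M - P) *m (S *m T *m invmx S) = S *m (P + (1%:M - P) *m T) *m invmx S.
  by rewrite [in RHS]mulmxDr [in RHS]mulmxDl SPS !mulmxA NS.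
have -> : P *m (S *m T *m invmx S) + (1%:M - P) = S *m (P *m T + (1%:M - P)) *m invmx S.
  by rewrite [in RHS]mulmxDr [in RHS]mulmxDl SNS !mulmxA PS.
by rewrite invmx_similar // !mulmxA mulmxKV.
Qed.

(* In the z-domain, [dilate P z] delays the coordinates selected by [P] by one step. *)
Definition dilate (K : fieldType) (p : nat) (P : 'M[K]_p) (a : K) :=
  a *: P + (1%:M - P).

Lemma dilate_comm (K : fieldType) (p : nat) (P X : 'M[K]_p) (a : K) :
  comm_mx X P -> comm_mx X (dilate P a).
Proof.
move=> XP; apply: comm_mxD (comm_mxB (comm_mx1 X) XP).
by rewrite /comm_mx -scalemxAr -scalemxAl XP.
Qed.

Lemma dilate_mul (K : fieldType) (p : nat) (P : 'M[K]_p) (a b : K) :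
  P *m P = P -> dilate P a *m dilate P b = dilate P (a * b).
Proof.
move=> idP; have PQc := complementary_compl idP.
rewrite /dilate; move: (1%:M - P) (idem_mul_compl PQc) (compl_mul_idem PQc)
  (compl_idem PQc) => Q PQ0 QP0 QQ.
rewrite mulmxDl !mulmxDr -!scalemxAl -!scalemxAr idP PQ0 QP0 QQ !scaler0 addr0.
by rewrite add0r scalerA.
Qed.

Lemma dilate1 (K : fieldType) (p : nat) (P : 'M[K]_p) : dilate P 1 = 1%:M.
Proof. by rewrite /dilate scale1r addrC subrK. Qed.

Lemma dilateV (K : fieldType) (p : nat) (P : 'M[K]_p) (a : K) :
  P *m P = P -> a != 0 -> dilate P a \in unitmx /\ invmx (dilate P a) = dilate P a^-1.
Proof.
move=> idP a0; have aa : dilate P a *m dilate P a^-1 = 1%:M.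
  by rewrite dilate_mul // mulfV // dilate1.
by have [uS _] := mulmx1_unit aa; split; last exact: mulmx1_invmx.
Qed.

Section Conjugation.
Variables (K : fieldType) (n p s : nat) (owner : 'I_p -> 'I_n) (kappa : {set 'I_n}).
Local Notation PK := (proj K (oracle_coords owner kappa)).

Lemma transfer_at_conj_alg (z : K) (Y : realization K s p) :
  corner_pad PK (rD Y) \in unitmx -> z%:M - rA Y \in unitmx ->
  z%:M - rA (conj_alg owner kappa Y) \in unitmx ->
  transfer_at z (conj_alg owner kappa Y) = conj_transfer PK (transfer_at z Y).
Proof.
move=> uE; have PQc := complementary_proj K (oracle_coords owner kappa).
have GMinv := mul_corner_pad_inv PQc.1 uE.
have PNN := compl_idem PQc.
rewrite /transfer_at /conj_transfer /=.
move: PK (1%:M - PK) (_ *m invmx _ *m _) PQc.2 PNN GMinv => P N Minv PN1 PNN GMinv.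
set a := rA Y; set b := rB Y; set c := rC Y; set d := rD Y; move=> uzA uzA'.
set Qm : 'M[K]_p := N - Minv *m d *m N + Minv.
have GQm : (P *m d + N) *m Qm = 1%:M.
  rewrite /Qm mulmxDr mulmxBr GMinv !mulmxA GMinv mulmxDl PNN -(mulmxA P d N).
  by rewrite (addrC (P *m (d *m N)) N) addrK addrC.
clearbody Qm.
set R := invmx (z%:M - a).
set V := invmx (z%:M - (a - b *m Minv *m c)) *m (b *m Qm).
set U := Qm - Minv *m c *m V.
have VE : V = R *m (b *m U).
  rewrite -[V](mulKmx uzA) -/R; congr (_ *m _).
  have -> : z%:M - a = z%:M - (a - b *m Minv *m c) - b *m Minv *m c.
    by rewrite opprB addrA addrAC addrK.
  rewrite mulmxBl mulKVmx // /U.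
  by rewrite (mulmxBr b Qm (Minv *m c *m V)) !mulmxA.
have MU : (P *m (c *m R *m b + d) + N) *m U = 1%:M.
  rewrite mulmxDr !mulmxDl -addrA -!mulmxA -VE.
  have -> : P *m (d *m U) + N *m U = (P *m d + N) *m U by rewrite mulmxDl mulmxA.
  by rewrite /U mulmxBr GQm !mulmxA GMinv addrC subrK.
rewrite (mulmx1_invmx MU) -(mulmxA _ (invmx _)) -/V mulmxBl.
have LU : (N *m d + P) *m Qm - (N *m d + P) *m Minv *m c *m V = (N *m d + P) *m U.
  by rewrite /U (mulmxBr (N *m d + P) Qm (Minv *m c *m V)) !mulmxA.
rewrite -addrA [- _ + _]addrC LU VE !mulmxA !mulmxDl mulmxDr !mulmxDl !mulmxA.
by rewrite [RHS]addrC addrA.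
Qed.
End Conjugation.

Section Permutation.
Variables (K : fieldType) (n p s : nat) (owner : 'I_p -> 'I_n) (m : nat).
Local Notation P1 := (proj K [set j | (owner j < m)%N]).

Lemma resolvent_perm_alg (z : K) (Y : realization K s p) :
  z != 0 -> z%:M - rA Y \in unitmx ->
  z%:M - rA (perm_alg owner m Y) \in unitmx /\
  invmx (z%:M - rA (perm_alg owner m Y)) *m rB (perm_alg owner m Y) =
  col_mx (invmx (z%:M - rA Y) *m rB Y *m dilate P1 z^-1) (z^-1 *: P1).
Proof.
move=> z0 uzA; rewrite /dilate /=.
move: P1 (proj_idem K [set j | (owner j < m)%N]) => P idP.
have zA : z%:M - block_mx (rA Y) (rB Y *m P) 0 0
          = block_mx (z%:M - rA Y) (- (rB Y *m P)) 0 z%:M.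
  by rewrite (scalar_mx_block s p z) opp_block_mx add_block_mx !oppr0 !addr0 add0r.
have uzA' : z%:M - block_mx (rA Y) (rB Y *m P) 0 0 \in unitmx.
  by rewrite zA unitmxE det_ublock det_scalar unitrM -unitmxE uzA unitrX ?unitfE.
split=> //; apply: (canLR (mulKmx uzA')); apply/esym.
rewrite zA mul_block_col; congr col_mx; move: (1%:M - P) => Q.
  rewrite !mulmxA mulmxV // mul1mx mulmxDr mulNmx -!scalemxAr -mulmxA idP.
  by rewrite addrC addrA addNr add0r.
by rewrite mul0mx add0r mul_scalar_mx scalerA mulfV // scale1r.
Qed.

Lemma transfer_at_perm_alg (z : K) (Y : realization K s p) :
  z != 0 -> z%:M - rA Y \in unitmx -> block_lower P1 (1%:M - P1) (rD Y) ->
  transfer_at z (perm_alg owner m Y) =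
  dilate P1 z *m transfer_at z Y *m dilate P1 z^-1.
Proof.
move=> z0 uzA; have [_ resolvent] := resolvent_perm_alg z0 uzA.
rewrite /transfer_at -mulmxA resolvent /dilate /block_lower /=.
have PQc := complementary_proj K [set j | (owner j < m)%N].
move: P1 (1%:M - P1) PQc.1 (idem_mul_compl PQc) => P Q idP PQ0.
set a := rA Y; set b := rB Y; set c := rC Y; set d := rD Y; move=> lowD.
set R := invmx (z%:M - a); set Si := z^-1 *: P + Q; set Sg := z *: P + Q.
rewrite mul_row_col.
have aR : a *m R = z *: R - 1%:M.
  by rewrite -[1%:M](mulmxV uzA) mulmxBl mul_scalar_mx opprB addrC subrK.
have stateE : (Q *m c + P *m c *m a) *m (R *m b *m Si)
          = Sg *m (c *m R *m b) *m Si - P *m c *m b *m Si.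
  rewrite !mulmxA mulmxDl -(mulmxA (P *m c) a R) aR mulmxBr mulmx1 -scalemxAr.
  by rewrite /Sg !mulmxDl !mulNmx -!scalemxAl addrCA addrA.
set G := Q *m d + P *m c *m b.
have feedthroughE : (Q *m d *m P + P *m c *m b *m P) *m (z^-1 *: P)
             + (Q *m d *m Q + P *m c *m b *m Q + P *m d *m P)
           = (Sg *m d + P *m c *m b) *m Si.
  have -> : Sg *m d + P *m c *m b = z *: (P *m d) + G.
    by rewrite /Sg mulmxDl -scalemxAl addrA.
  rewrite -(mulmxDl (Q *m d) (P *m c *m b) P) -(mulmxDl (Q *m d) (P *m c *m b) Q) -/G.
  clearbody G; rewrite /Si mulmxDr !mulmxDl -!scalemxAl -!scalemxAr scalerA mulfV //.
  rewrite scale1r -(mulmxA G P P) idP lowD scaler0 add0r.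
  by rewrite (addrC (G *m Q)) addrA (addrC (z^-1 *: _)).
rewrite -addrA stateE feedthroughE mulmxDl addrACA addNr addr0.
by rewrite mulmxDr mulmxDl.
Qed.
End Permutation.

Section OracleBlocks.
Variables (R : fieldType) (n p s : nat) (owner : 'I_p -> 'I_n).
Variables (kappa : {set 'I_n}) (m : nat).
Local Notation P1 := (proj R [set j | (owner j < m)%N]).
Local Notation PK := (proj R (oracle_coords owner kappa)).

Let P1c : complementary P1 (1%:M - P1) := complementary_proj R _.

Lemma causal_block_lower (X : realization R s p) :
  causal owner X -> block_lower P1 (1%:M - P1) (rD X).
Proof.
move=> cX; rewrite /block_lower proj_compl; apply/matrixP=> i j.
rewrite proj_mulmxE !inE mxE; case: ltnP => i_m; case: ltnP => j_m //=;
  rewrite ?mulr0 ?mul0r // cX ?mulr0 ?mul0r //; exact: leq_trans i_m j_m.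
Qed.

Lemma block_lower_conj_alg (X : realization R s p) :
  block_lower P1 (1%:M - P1) (rD X) ->
  block_lower P1 (1%:M - P1) (rD (conj_alg owner kappa X)).
Proof.
move=> lowD; have P1K : comm_mx P1 PK := proj_comm _ _ _.
have lowPK := block_lower_comm P1c P1K.
have lowPN := block_lower_comm P1c (comm_mxB (comm_mx1 P1) P1K).
have lowMinv : block_lower P1 (1%:M - P1) (PK *m invmx (corner_pad PK (rD X)) *m PK).
  apply: (block_lowerM P1c (block_lowerM P1c lowPK (block_lower_invmx P1c _)) lowPK).
  exact: block_lower_corner_pad.
apply: (block_lowerM P1c (block_lowerD (block_lowerM P1c lowPN lowD) lowPK)).
exact: block_lowerD (block_lowerB lowPN (block_lowerM P1c (block_lowerM P1c lowMinv lowD)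
  lowPN)) lowMinv.
Qed.

Lemma rD_perm_alg (X : realization R s p) :
  rD (perm_alg owner m X) =
  block_diag P1 (1%:M - P1) (rD X) + P1 *m (rC X *m rB X) *m (1%:M - P1).
Proof.
by rewrite /= /block_diag; move: P1 (1%:M - P1) => P Q; rewrite !mulmxA addrC addrA.
Qed.

Lemma unitmx_corner_pad_perm_alg (X : realization R s p) :
  block_lower P1 (1%:M - P1) (rD X) -> corner_pad PK (rD X) \in unitmx ->
  corner_pad PK (rD (perm_alg owner m X)) \in unitmx.
Proof.
move=> lowD uE; have Q1c := complementaryC P1c.
have P1K : comm_mx P1 PK := proj_comm _ _ _.
have Q1K : comm_mx (1%:M - P1) PK := compl_comm P1c P1K.
have uppD' : block_lower (1%:M - P1) P1 (rD (perm_alg owner m X)).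
  rewrite rD_perm_alg; apply: block_lowerD.
    by apply: (block_lower_comm Q1c); rewrite -block_diagC; exact: block_diag_comm.
  by rewrite -mulmxA; exact: (block_lower_compl_mul Q1c).
rewrite (unitmx_block_lower Q1c (block_lower_corner_pad Q1c Q1K uppD')) block_diagC.
rewrite (block_diag_corner_pad _ P1c) // rD_perm_alg block_diagD (block_diag_offdiag P1c).
rewrite addr0 (block_diag_id_comm P1c (block_diag_comm P1c _)).
rewrite -(block_diag_corner_pad _ P1c) //.
by rewrite -(unitmx_block_lower P1c (block_lower_corner_pad P1c P1K lowD)).
Qed.
End OracleBlocks.

HB.instance Definition _ (R : fieldType) :=
  GRing.RMorphism.copy (@frac_poly R) (@FracField.tofrac _).
HB.instance Definition _ (R : fieldType) :=
  GRing.RMorphism.copy (@ratC R) (@frac_poly R \o polyC).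

Definition map_realization (K L : Type) (f : K -> L) (s p : nat)
    (Y : realization K s p) : realization L s p :=
  Realization (map_mx f (rA Y)) (map_mx f (rB Y)) (map_mx f (rC Y)) (map_mx f (rD Y)).

Section MapRealization.
Variables (K L : fieldType) (f : {rmorphism K -> L}) (n p s : nat).
Variable (owner : 'I_p -> 'I_n).

Lemma map_conj_alg kappa (Y : realization K s p) :
  map_realization f (conj_alg owner kappa Y) =
  conj_alg owner kappa (map_realization f Y).
Proof.
by rewrite /map_realization /=; congr Realization;
  rewrite /= !(map_mxM, map_mxD, map_mxN, map_invmx, map_mx1, map_proj).
Qed.

Lemma map_perm_alg m (Y : realization K s p) :
  map_realization f (perm_alg owner m Y) = perm_alg owner m (map_realization f Y).
Proof.
by rewrite /map_realization /=; congr Realization;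
  rewrite /= !(map_block_mx, map_col_mx, map_row_mx, map_mxM, map_mxD, map_mxN,
               map_mx0, map_mx1, map_proj).
Qed.

Lemma map_corner_pad (P D : 'M[K]_p) :
  map_mx f (corner_pad P D) = corner_pad (map_mx f P) (map_mx f D).
Proof. by rewrite /corner_pad map_mxD map_mxB !map_mxM map_mx1. Qed.

End MapRealization.

Lemma unitmx_frac_resolvent (R : fieldType) (s : nat) (A : 'M[R]_s) :
  (frac_poly 'X)%:M - map_mx (@ratC R) A \in unitmx.
Proof.
have -> : (frac_poly 'X)%:M - map_mx (@ratC R) A = map_mx (@frac_poly R) (char_poly_mx A).
  by rewrite /char_poly_mx map_mxB map_scalar_mx -map_mx_comp.
rewrite unitmxE det_map_mx unitfE /frac_poly tofrac_eq0.
exact: monic_neq0 (char_poly_monic A).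
Qed.

Lemma frac_polyX_neq0 (R : fieldType) : @frac_poly R 'X != 0.
Proof. by rewrite /frac_poly tofrac_eq0 polyX_eq0. Qed.

Section Transfer.
Variables (R : fieldType) (n p s : nat) (owner : 'I_p -> 'I_n).
Local Notation z := (@frac_poly R 'X).

Lemma transferE (q : nat) (X : realization R q p) :
  transfer X = transfer_at z (map_realization (@ratC R) X).
Proof. by []. Qed.

Lemma transfer_conj_alg kappa (X : realization R s p) :
  corner_pad (proj R (oracle_coords owner kappa)) (rD X) \in unitmx ->
  transfer (conj_alg owner kappa X) =
  conj_transfer (proj _ (oracle_coords owner kappa)) (transfer X).
Proof.
move=> uE; rewrite !transferE map_conj_alg transfer_at_conj_alg ?unitmx_frac_resolvent //.
  by rewrite -(map_proj (@ratC R)) -map_corner_pad map_unitmx.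
by rewrite -map_conj_alg unitmx_frac_resolvent.
Qed.

Lemma transfer_perm_alg m (X : realization R s p) :
  block_lower (proj R [set j | (owner j < m)%N]) (1%:M - proj R [set j | (owner j < m)%N])
    (rD X) ->
  let S := dilate (proj _ [set j | (owner j < m)%N]) z in
  transfer (perm_alg owner m X) = S *m transfer X *m invmx S.
Proof.
move=> lowD S; rewrite {}/S; have z0 := frac_polyX_neq0 R.
have [_ ->] := dilateV (proj_idem _ [set j | (owner j < m)%N]) z0.
rewrite !transferE map_perm_alg transfer_at_perm_alg ?unitmx_frac_resolvent //.
by rewrite /block_lower -(map_proj (@ratC R)) -(map_mx1 (@ratC R)) -map_mxB -!map_mxM lowD
  map_mx0.
Qed.

End Transfer.

Theorem propositionG1 (R : fieldType) (n p s : nat) (owner : 'I_p -> 'I_n)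
  (X : realization R s p) (kappa : {set 'I_n}) (m : nat) :
  (m < n)%N ->
  causal owner X ->
  principal_sub (rD X) (oracle_coords owner kappa) \in unitmx ->
  transfer (conj_alg owner kappa (perm_alg owner m X)) =
  transfer (perm_alg owner m (conj_alg owner kappa X)).
Proof.
(* [m < n] only makes pi a proper rotation; the identity holds for every [m]. *)
move=> _ cX uDk; have uE := unitmx_principal_sub uDk.
have lowX := causal_block_lower m cX.
rewrite (transfer_conj_alg (unitmx_corner_pad_perm_alg lowX uE)) (transfer_perm_alg lowX).
rewrite (transfer_perm_alg (block_lower_conj_alg kappa lowX)) (transfer_conj_alg uE).
apply: conj_transfer_similar.
  exact: (dilateV (proj_idem _ [set j | (owner j < m)%N]) (frac_polyX_neq0 R)).1.
exact/dilate_comm/proj_comm.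
Qed.
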